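(* Let $n=2e$ be even and consider a collection of disjoint decorated circularly ordered subsets of $\mathbb{Z}_n$ covering $\mathbb{Z}_n$ (each element of $\mathbb{Z}_n$ occurring in exactly one subset, with a decoration $+$ or $-$). This collection is a vertex set (i.e., it is the set of vertices induced by a signed planar diagram of the $n$-gon all of whose vertices have degree at least $3$) if and only if the following conditions hold: (1) each subset has at least three corners; (2) for no $i\in\mathbb{Z}_n$ is $i_+(i+1)_+\cdots$ a subset; (3) if $i_+j_+\cdots$ is a subset then $(j-1)_+(i+1)_+\cdots$ is a subset, and if $i_+j_-\cdots$ is a subset then $(i+1)_-(j+1)_+\cdots$ is a subset.
   Context: The corners of an $n$-gon are labelled by $i\in\mathbb{Z}_n$ in circular order, and $\bar i$ denotes the edge from corner $i$ to corner $i+1$. A (signed) planar diagram is a partition of the $n$ edges into $n/2$ unordered pairs, each pair carrying a sign: $\{\bar i,\bar j\}_+$ (opposing pair, glued orientation-compatibly) or $\{\bar i,\bar j\}_-$ (twisted pair); glueing gives a single-tile tiling of a closed surface. A decorated corner is a symbol $i_\pm$ with $i\in\mathbb{Z}_n$. A decorated circularly ordered subset is a cyclic sequence of decorated corners with distinct underlying corners, considered up to rotation (keeping decorations) and up to reversing the cyclic order while simultaneously changing every decoration $\pm$ to $\mp$. We say ''$a_\alpha b_\beta\cdots$ is a subset'' if some subset has a representative in which $a_\alpha$ is immediately followed (cyclically) by $b_\beta$. A planar diagram $D$ induces vertices by the successor rules: $i_+$ is followed by $(j+1)_+$ if $\{\bar i,\bar j\}_+\in D$, and by $j_-$ if $\{\bar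 i,\bar j\}_-\in D$; $i_-$ is followed by $(j+1)_+$ if $\{\overline{i-1},\bar j\}_-\in D$, and by $j_-$ if $\{\overline{i-1},\bar j\}_+\in D$. Starting from any decorated corner and following these rules until returning yields a vertex (a decorated circularly ordered subset); the degree of a vertex is its number of corners. A vertex set is the collection of vertices induced in this way by a planar diagram all of whose vertices have degree at least $3$. *)

From mathcomp Require Import all_boot.
Set Implicit Arguments. Unset Strict Implicit. Unset Printing Implicit Defensive.

(* Corners of the n-gon: 'I_n (= Z_n), with cyclic successor ordS / predecessor
   ord_pred.  Edge \bar i (from corner i to i+1) is also indexed by i : 'I_n.
   Decorated corner i_+ is (i, true), i_- is (i, false). *)
Definition dcorner (n : nat) := ('I_n * bool)%type.

Definition dflip n (x : dcorner n) : dcorner n := (x.1, ~~ x.2).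

(* A signed planar diagram: pr i is the edge paired with edge i (a fixed-point
   free involution, so the pairs partition the n edges), sg i is the sign of
   the pair containing i (true = +, opposing; false = -, twisted). *)
Definition diagram n (pr : 'I_n -> 'I_n) (sg : 'I_n -> bool) : Prop :=
  forall i, [/\ pr (pr i) = i, pr i != i & sg (pr i) = sg i].

Definition vnext n (pr : 'I_n -> 'I_n) (sg : 'I_n -> bool) (x : dcorner n)
  : dcorner n :=
  let: (i, d) := x in
  if d then (if sg i then (ordS (pr i), true) else (pr i, false))
  else let k := ord_pred i in
       if sg k then (pr k, false) else (ordS (pr k), true).

Definition vertex_of n pr sg (x : dcorner n) : seq (dcorner n) :=
  orbit (@vnext n pr sg) x.

Definition dcs_equiv n (s t : seq (dcorner n)) : Prop :=
  exists k, t = rot k s \/ t = rot k (rev (map (@dflip n) s)).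

Definition dcs_cover n (C : seq (seq (dcorner n))) : Prop :=
  uniq (map fst (flatten C)) /\ forall i : 'I_n, i \in map fst (flatten C).

Definition is_vertex_set n (C : seq (seq (dcorner n))) : Prop :=
  exists pr sg, [/\ diagram pr sg,
    (forall x, 3 <= size (@vertex_of n pr sg x)),
    (forall s, s \in C -> exists x, dcs_equiv s (@vertex_of n pr sg x)) &
    (forall x, exists2 s, s \in C & dcs_equiv s (@vertex_of n pr sg x))].

(* "a b ... is a subset": some subset has a representative in which a is
   immediately (cyclically) followed by b *)
Definition followed n (C : seq (seq (dcorner n))) (a b : dcorner n) : Prop :=
  exists2 s, s \in C &
    ((a \in s) && (next s a == b)) ||
    ((dflip b \in s) && (next s (dflip b) == dflip a)).

From mathcomp Require Import all_boot.
Set Implicit Arguments. Unset Strict Implicit. Unset Printing Implicit Defensive.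

(* The successor map [vnext] of a diagram satisfies [vnext (dflip (vnext x)) = dflip x],
   so its cycles are the vertices and the mirror image (reversed, decorations flipped) of
   a vertex is the same vertex.  Hence for a vertex set C the relation "a is followed by b
   in C" is exactly the graph of [vnext], and conditions (2) and (3) are the successor rules
   read off at the corners i_+.  Conversely, for any cover C the relation is the graph of a
   map F with the same flip symmetry, and under (2) and (3) the pairing and signs read off
   from F at the corners i_+ form a diagram whose successor map is F; its vertices are then
   the subsets of C. *)

Lemma uniq_map_inj_in (T U : eqType) (f : T -> U) (s : seq T) :
  uniq (map f s) -> {in s &, injective f}.
Proof.
elim: s => //= z s IH /andP[zs us] x y; rewrite !inE.
case/predU1P=> [->|xs] /predU1P[->|ys] e //.
- by rewrite e map_f in zs.
- by rewrite -e map_f in zs.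
- exact: IH.
Qed.

Lemma uniq_flatten_map_eq (S T : eqType) (f : S -> seq T) (ss : seq S) s s' x :
  uniq (flatten (map f ss)) -> s \in ss -> s' \in ss -> x \in f s -> x \in f s' ->
  s = s'.
Proof.
elim: ss => //= s0 ss IH; rewrite cat_uniq => /and3P[_ /hasPn disj u].
have in_flatten t y : t \in ss -> y \in f t -> y \in flatten (map f ss).
  by move=> tss yt; apply/flattenP; exists (f t); rewrite ?map_f.
rewrite !inE; case/predU1P=> [->|sss] /predU1P[->|s'ss] xs xs' //.
- by case/negP: (disj x (in_flatten _ _ s'ss xs')).
- by case/negP: (disj x (in_flatten _ _ sss xs)).
- exact: IH.
Qed.

Lemma next_eq_prev (T : eqType) (s : seq T) x y : uniq s ->
  (x \in s) && (next s x == y) = (y \in s) && (prev s y == x).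
Proof.
move=> us; apply/andP/andP=> [[xs /eqP <-]|[ys /eqP <-]].
  by rewrite mem_next prev_next.
by rewrite mem_prev next_prev.
Qed.

Section Mirror.
Context {n : nat}.
Implicit Types (s t : seq (dcorner n)) (a b x : dcorner n).

Lemma dflipK : involutive (@dflip n).
Proof. by case=> i d; rewrite /dflip negbK. Qed.

Lemma dflip_inj : injective (@dflip n).
Proof. exact: inv_inj dflipK. Qed.

Definition mirror s := rev (map (@dflip n) s).

Lemma mem_mirror s x : (x \in mirror s) = (dflip x \in s).
Proof. by rewrite mem_rev -{1}(dflipK x) (mem_map dflip_inj). Qed.

Lemma mirror_uniq s : uniq (mirror s) = uniq s.
Proof. by rewrite rev_uniq (map_inj_uniq dflip_inj). Qed.

Lemma next_mirror s x : uniq s -> next (mirror s) x = dflip (prev s (dflip x)).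
Proof.
move=> us; rewrite next_rev ?(map_inj_uniq dflip_inj) //.
by rewrite -{1}(dflipK x) (prev_map dflip_inj).
Qed.

Lemma dcs_equiv_size s t : dcs_equiv s t -> size t = size s.
Proof. by case=> k [->|->]; rewrite size_rot // size_rev size_map. Qed.

Lemma mem_map_fst s a : (a.1 \in map fst s) = (a \in s) || (dflip a \in s).
Proof.
case: a => i d; apply/mapP/idP => [[[j e] js /= ->]|].
  by case: d; case: e js => js; rewrite ?js ?orbT.
by case/orP=> ?; [exists (i, d) | exists (i, ~~ d)].
Qed.

Lemma uniq_fst_dflipF s a : uniq (map fst s) -> a \in s -> dflip a \notin s.
Proof.
move=> us as_; apply/negP => fas.
have /eqP := uniq_map_inj_in us fas as_ (erefl _).
by case: a {as_ fas} => i []; rewrite /dflip xpair_eqE eqxx.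
Qed.

End Mirror.

Section Adjacent.
Variable n : nat.
Implicit Types (s t : seq (dcorner n)) (a b : dcorner n).

Definition adjacent s a b :=
  ((a \in s) && (next s a == b)) || ((dflip b \in s) && (next s (dflip b) == dflip a)).

Definition succ s a := if a \in s then next s a else dflip (prev s (dflip a)).

Lemma adjacent_flip s a b : adjacent s (dflip b) (dflip a) = adjacent s a b.
Proof. by rewrite /adjacent !dflipK orbC. Qed.

Lemma adjacent_rot k s a b : uniq s -> adjacent (rot k s) a b = adjacent s a b.
Proof. by move=> us; rewrite /adjacent !mem_rot !next_rot. Qed.

Lemma adjacent_mirror s a b : uniq s -> adjacent (mirror s) a b = adjacent s a b.
Proof.
move=> us; rewrite /adjacent !mem_mirror !next_mirror // !dflipK.
rewrite !(can2_eq dflipK dflipK) !dflipK.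
by rewrite -!next_eq_prev // orbC.
Qed.

Lemma adjacent_equiv s t a b : uniq s -> dcs_equiv s t -> adjacent t a b = adjacent s a b.
Proof.
move=> us [k [->|->]]; first exact: adjacent_rot.
by rewrite adjacent_rot ?mirror_uniq ?adjacent_mirror.
Qed.

Lemma adjacent_mem s a b : adjacent s a b -> a.1 \in map fst s.
Proof.
rewrite mem_map_fst; case/orP=> /andP[xs /eqP e]; first by rewrite xs.
by rewrite -e mem_next xs orbT.
Qed.

Lemma adjacent_succ s a b : uniq (map fst s) -> a.1 \in map fst s ->
  adjacent s a b = (succ s a == b).
Proof.
move=> us; have s_uniq := map_uniq us; rewrite mem_map_fst /adjacent /succ.
case: ifP => [as_ _|_ /= fas].
  apply: orb_idr => /andP[fbs /eqP e].
  by move: (uniq_fst_dflipF us as_); rewrite -e mem_next fbs.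
by rewrite next_eq_prev // fas -(inj_eq dflip_inj) dflipK eq_sym.
Qed.

Lemma adjacent_dflipF s a : uniq (map fst s) -> ~~ adjacent s a (dflip a).
Proof.
move=> us; rewrite /adjacent dflipK orbb; apply/andP=> -[as_ /eqP e].
by move: (uniq_fst_dflipF us as_); rewrite -e mem_next as_.
Qed.

End Adjacent.

Section ReversibleSuccessor.
Variables (n : nat) (f : dcorner n -> dcorner n).
Hypothesis f_flip : forall x, f (dflip (f x)) = dflip x.

Lemma reversible_inj : injective f.
Proof. by move=> x y e; apply: dflip_inj; rewrite -(f_flip x) -(f_flip y) e. Qed.

Lemma fcycle_mirror s : uniq s -> fcycle f s -> fcycle f (mirror s).
Proof.
move=> us cs; apply: cycle_from_next => [|x]; first by rewrite mirror_uniq.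
rewrite mem_mirror next_mirror // => fxs.
set z := prev s (dflip x); have zs : z \in s by rewrite mem_prev.
have /eqP fz : f z == dflip x by rewrite -(next_prev us (dflip x)); exact: next_cycle cs zs.
by apply/eqP; rewrite -{1}(dflipK x) -fz f_flip.
Qed.

Lemma orbit_equiv s x : uniq s -> fcycle f s -> x.1 \in map fst s ->
  dcs_equiv s (orbit f x).
Proof.
move=> us cs; rewrite mem_map_fst => /orP[xs|fxs].
  by exists (index x s); left; exact: orbitE.
have xs : x \in mirror s by rewrite mem_mirror.
exists (index x (mirror s)); right.
by apply: orbitE; rewrite ?mirror_uniq ?fcycle_mirror.
Qed.

Lemma adjacent_orbit x a b : adjacent (orbit f x) a b -> f a = b.
Proof.
have cx := cycle_orbit reversible_inj x.
case/orP=> /andP[ys /eqP e]; first by apply/eqP; rewrite -e; exact: next_cycle cx ys.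
have /eqP := next_cycle cx ys; rewrite e => fb.
by rewrite -(dflipK a) -fb f_flip dflipK.
Qed.

Lemma orbit_adjacent a : adjacent (orbit f a) a (f a).
Proof.
apply/orP; left; rewrite in_orbit /=; apply/eqP/esym/eqP.
exact: next_cycle (cycle_orbit reversible_inj a) (in_orbit _ _).
Qed.

End ReversibleSuccessor.

Section DiagramRules.
Variables (n : nat) (pr : 'I_n -> 'I_n) (sg : 'I_n -> bool).
Hypothesis hd : diagram pr sg.
Local Notation f := (vnext pr sg).

Lemma vnext_plus i : f (i, true) = if sg i then (ordS (pr i), true) else (pr i, false).
Proof. by rewrite /vnext; case: (sg i). Qed.

Lemma vnext_minus i : f (i, false) =
  if sg (ord_pred i) then (pr (ord_pred i), false) else (ordS (pr (ord_pred i)), true).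
Proof. by rewrite /vnext; case: (sg _). Qed.

Lemma vnext_flip x : f (dflip (f x)) = dflip x.
Proof.
case: x => i [].
  case: (hd i) => pp _ ss; rewrite vnext_plus.
  by case: ifP => si; rewrite /dflip /= ?ordSK ss si pp.
case: (hd (ord_pred i)) => pp _ ss; rewrite vnext_minus.
by case: ifP => si; rewrite /dflip /= ?ordSK ss si pp ord_predK.
Qed.

Lemma vnextTT_neq i : f (i, true) != (ordS i, true).
Proof.
rewrite vnext_plus; case: ifP => _; rewrite xpair_eqE /= ?andbF ?andbT //.
by rewrite (inj_eq (@ordS_inj n)); case: (hd i).
Qed.

Lemma vnextTT i j : f (i, true) = (j, true) -> f (ord_pred j, true) = (ordS i, true).
Proof.
case: (hd i) => pp _ ss; rewrite vnext_plus; case: ifP => // si [<-].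
by rewrite ordSK vnext_plus ss si pp.
Qed.

Lemma vnextTF i j : f (i, true) = (j, false) -> f (ordS i, false) = (ordS j, true).
Proof. by rewrite vnext_plus vnext_minus ordSK; case: ifP => // _ [<-]. Qed.

End DiagramRules.

Section Realization.
Variables (n : nat) (f : dcorner n -> dcorner n).
Hypotheses (f_flip : forall x, f (dflip (f x)) = dflip x)
  (f_dflipF : forall x, f x != dflip x)
  (fTT_neq : forall i, f (i, true) != (ordS i, true))
  (fTT : forall i j, f (i, true) = (j, true) -> f (ord_pred j, true) = (ordS i, true))
  (fTF : forall i j, f (i, true) = (j, false) -> f (ordS i, false) = (ordS j, true)).

(* an opposing pair {i, j} is read off as i_+ |-> (j+1)_+, a twisted one as i_+ |-> j_- *)
Definition realized_sg (i : 'I_n) := (f (i, true)).2.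
Definition realized_pr (i : 'I_n) :=
  if realized_sg i then ord_pred (f (i, true)).1 else (f (i, true)).1.
Local Notation sg := realized_sg.
Local Notation pr := realized_pr.

Lemma realized_plus i : f (i, true) = if sg i then (ordS (pr i), true) else (pr i, false).
Proof.
by rewrite /realized_pr /realized_sg; case: (f (i, true)) => j [] /=; rewrite ?ord_predK.
Qed.

Lemma realized_diagram : diagram pr sg.
Proof.
move=> i; have := realized_plus i; case: ifP => si fi.
  have := fTT fi; rewrite ordSK realized_plus.
  case: ifP => // spi /pair_equal_spec[/ordS_inj ppi _]; split=> //.
  by apply: contra (fTT_neq i) => /eqP pii; rewrite fi pii.
have fSi := fTF fi; have := f_flip (ordS i, false); rewrite fSi /dflip /= => fSpi.
have := realized_plus (pr i); case: ifP => spi fpi.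
  (* an opposing sign at [pr i] would make [f] hit [(ordS (pr i), true)] twice *)
  have := fTT fpi; rewrite ordSK -fSi => /(reversible_inj f_flip).
  by case/pair_equal_spec.
have := fTF fpi; rewrite fSpi => /pair_equal_spec[/ordS_inj ppi _]; split=> //.
by apply: contra (f_dflipF (i, true)) => /eqP pii; rewrite fi pii.
Qed.

Lemma vnext_realized : vnext pr sg =1 f.
Proof.
case=> i []; first by rewrite vnext_plus realized_plus.
rewrite vnext_minus; have := realized_plus (ord_pred i); case: ifP => _ fk.
  have := fTT fk; rewrite ordSK ord_predK => fp.
  by rewrite -[(i, false)]/(dflip (i, true)) -fp f_flip.
by have := fTF fk; rewrite ord_predK.
Qed.

End Realization.

Lemma followed_flip n (C : seq (seq (dcorner n))) a b :
  followed C a b -> followed C (dflip b) (dflip a).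
Proof. by case=> s sC sab; exists s; rewrite // -/(adjacent _ _ _) adjacent_flip. Qed.

Section Cover.
Variables (n : nat) (C : seq (seq (dcorner n))).
Hypothesis hC : dcs_cover C.
Implicit Types (s : seq (dcorner n)) (a b : dcorner n).

Lemma cover_uniq_fst s : s \in C -> uniq (map fst s).
Proof.
case: hC => u _ sC; move: u.
rewrite (perm_uniq (perm_map fst (perm_flatten (perm_to_rem sC)))) /=.
by rewrite map_cat cat_uniq => /andP[].
Qed.

Lemma cover_uniq s : s \in C -> uniq s.
Proof. by move/cover_uniq_fst/map_uniq. Qed.

Lemma cover_block a : exists2 s, s \in C & a.1 \in map fst s.
Proof.
case: hC => _ /(_ a.1); rewrite map_flatten => /flattenP[t /mapP[s sC ->]].
by exists s.
Qed.

Lemma cover_block_unique s s' i : s \in C -> s' \in C ->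
  i \in map fst s -> i \in map fst s' -> s = s'.
Proof. by case: hC => u _; apply: uniq_flatten_map_eq; rewrite -map_flatten. Qed.

Lemma followed_succ s a b : s \in C -> a.1 \in map fst s ->
  followed C a b <-> succ s a = b.
Proof.
move=> sC as_; have us := cover_uniq_fst sC.
split=> [[t tC tab]|<-]; last by exists s; rewrite // -/(adjacent _ _ _) adjacent_succ.
have ts := cover_block_unique tC sC (adjacent_mem tab) as_; subst t.
by apply/eqP; rewrite -adjacent_succ.
Qed.

Lemma followed_fun : exists F, forall a b, followed C a b <-> F a = b.
Proof.
have /fin_all_exists[F hF] : forall a : 'I_n * bool,
    exists b, forall b', followed C a b' <-> b = b'.
  by move=> a; have [s sC as_] := cover_block a; exists (succ s a) => b; exact: followed_succ.
by exists F.
Qed.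

Lemma followed_dflipF a : ~ followed C a (dflip a).
Proof. by case=> s sC; apply/negP; exact: adjacent_dflipF (cover_uniq_fst sC). Qed.

Lemma followed_fcycle F s : (forall a b, followed C a b <-> F a = b) ->
  s \in C -> fcycle F s.
Proof.
move=> hF sC; apply: cycle_from_next => [|x xs]; first exact: cover_uniq.
by apply/eqP/hF; exists s; rewrite //= xs eqxx.
Qed.

End Cover.

Lemma is_vertex_setP n (C : seq (seq (dcorner n))) : dcs_cover C ->
  is_vertex_set C <-> exists pr sg, [/\ diagram pr sg,
    forall s, s \in C -> 3 <= size s & forall a b, followed C a b <-> vnext pr sg a = b].
Proof.
move=> hC; split=> [[pr [sg [hd h3 hCV hVC]]]|[pr [sg [hd h3 hF]]]].
  exists pr, sg; split=> // [s sC|a b]; first by have [x /dcs_equiv_size <-] := hCV s sC.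
  split=> [[s sC sab]|<-].
    have [x ex] := hCV s sC; apply: (adjacent_orbit (vnext_flip hd) (x := x)).
    by rewrite (adjacent_equiv _ _ (cover_uniq hC sC) ex).
  have [s sC ex] := hVC a; exists s => //; change (adjacent s a (vnext pr sg a)).
  by rewrite -(adjacent_equiv _ _ (cover_uniq hC sC) ex) (orbit_adjacent (vnext_flip hd)).
have orbit_block x : exists2 s, s \in C & dcs_equiv s (orbit (vnext pr sg) x).
  have [s sC xs] := cover_block hC x; exists s => //.
  exact: orbit_equiv (vnext_flip hd) _ _ (cover_uniq hC sC) (followed_fcycle hC hF sC) xs.
exists pr, sg; split=> // [x|s sC].
  by have [s sC /dcs_equiv_size ->] := orbit_block x; exact: h3.
case: s sC (h3 s sC) => // x s sC _; exists x.
by apply: orbit_equiv (vnext_flip hd) _ _ (cover_uniq hC sC) (followed_fcycle hC hF sC) _;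
  rewrite mem_head.
Qed.

Theorem proposition3p1 (n : nat) (hn0 : 0 < n) (hev : ~~ odd n)
  (C : seq (seq (dcorner n))) (hC : dcs_cover C) :
  is_vertex_set C <->
  [/\ (forall s, s \in C -> 3 <= size s),
      (forall i : 'I_n, ~ followed C (i, true) (ordS i, true)) &
      (forall i j : 'I_n,
         (followed C (i, true) (j, true) ->
            followed C (ord_pred j, true) (ordS i, true)) /\
         (followed C (i, true) (j, false) ->
            followed C (ordS i, false) (ordS j, true)))].
Proof.
split=> [/(is_vertex_setP hC)[pr [sg [hd h3 hF]]]|[h3 hTT_neq hTT]].
  split=> // [i /hF fi|i j]; first by have := vnextTT_neq hd i; rewrite fi eqxx.
  by split=> /hF; [move/(vnextTT hd) | move/vnextTF] => /hF.
have [F hF] := followed_fun hC.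
have F_flip x : F (dflip (F x)) = dflip x by apply/hF/followed_flip/hF.
have F_dflipF x : F x != dflip x by apply/eqP => /hF; exact: followed_dflipF hC x.
have FTT_neq i : F (i, true) != (ordS i, true) by apply/eqP => /hF; exact: hTT_neq.
have FTT i j : F (i, true) = (j, true) -> F (ord_pred j, true) = (ordS i, true).
  by move/hF/(proj1 (hTT i j))/hF.
have FTF i j : F (i, true) = (j, false) -> F (ordS i, false) = (ordS j, true).
  by move/hF/(proj2 (hTT i j))/hF.
apply/(is_vertex_setP hC); exists (realized_pr F), (realized_sg F); split=> // [|a b].
  exact: realized_diagram F_flip F_dflipF FTT_neq FTT FTF.
by rewrite (vnext_realized F_flip FTT FTF).
Qed.
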